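(* Let $\alpha>1$ and let $B\subset\mathbb{H}$ be nonempty with $\hat B:=B\setminus\{x\in\mathbb{H}: x_2\le|x_1|^{1/\alpha}\}$ finite. Define $h_0=\max_{x\in\hat B}x_2$ if $\hat B\neq\emptyset$, and $h_0=\min\{h\in\mathbb{Z}_{\ge0}:\ B\cap([-\lceil h^\alpha\rceil,\lceil h^\alpha\rceil]\times[0,h])\neq\emptyset\}$ if $\hat B=\emptyset$. Let $l_{h_0}=\{(i,h_0):\ |i|\le\lfloor h_0^\alpha\rfloor\}$. Then there is a constant $c>0$ such that for all sufficiently large $N$, $$\sum_{w\in l_{h_0}}\bar{\mathcal H}_{B\cup l_{h_0},N}(w)\ge c.$$
   Context: $\mathbb{H}=\{(x_1,x_2)\in\mathbb{Z}^2:\ x_2\ge 0\}$ and $L_n=\{(x_1,n):x_1\in\mathbb{Z}\}$. $(S_n)_{n\ge0}$ is a simple random walk on $\mathbb{Z}^2$; $P_z$ denotes its law started at $z$. For $A\subset\mathbb{Z}^2$, $\bar\tau_A=\min\{n\ge0: S_n\in A\}$. For $A\subset\mathbb{H}$, $x\in A$ and $N\ge1$, define $$\bar{\mathcal H}_{A,N}(x)=\sum_{z\in L_N\setminus A}P_z\big(S_{\bar\tau_{A\cup L_0}}=x\big).$$ Integer intervals $[a,b]$ denote $\{a,a+1,\dots,b\}$. *)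

From Stdlib Require Import Reals ZArith List.
Open Scope R_scope.

(* Points of Z^2 ; subsets of Z^2 are boolean characteristic functions
   (classically, every subset has one). *)
Definition pt := (Z * Z)%type.
Definition zset := pt -> bool.

(* Real power with the convention 0^y = 0 for y > 0 (Stdlib's Rpower 0 y = 1). *)
Definition rpow (x y : R) : R :=
  if Req_EM_T x 0 then 0 else Rpower x y.

Definition Zfloor (x : R) : Z := (up x - 1)%Z.
Definition Zceil (x : R) : Z := (- Zfloor (- x))%Z.

Definition sumR {A : Type} (f : A -> R) (l : list A) : R :=
  fold_right (fun a acc => f a + acc) 0 l.

Definition zrange (a b : Z) : list Z :=
  map (fun k => (a + Z.of_nat k)%Z) (seq 0 (Z.to_nat (b - a + 1))).

Definition nbrs (z : pt) : list pt :=
  let '(a, b) := z in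
  ((a + 1, b) :: (a - 1, b) :: (a, b + 1) :: (a, b - 1) :: nil)%Z.

(* paths_to A m z x = number of nearest-neighbour paths s_0 = z, ..., s_m = x
   such that s_i \notin A \cup L_0 for all i < m.
   Hence P_z(S_{tau_{A \cup L_0}} = x) = sum_m paths_to A m z x / 4^m. *)
Fixpoint paths_to (A : zset) (m : nat) (z x : pt) : nat :=
  match m with
  | O => if (Z.eqb (fst z) (fst x) && Z.eqb (snd z) (snd x))%bool then 1%nat else 0%nat
  | S m' =>
      if (A z || Z.eqb (snd z) 0)%bool then 0%nat
      else fold_right (fun y acc => (paths_to A m' y x + acc)%nat) 0%nat (nbrs z)
  end.

(* Partial sum of Hbar_{A,N}(x): starting points z = (i,N) with |i| <= K,
   z \notin A, and paths of length <= K. Hbar_{A,N}(x) is the supremum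
   (limit, as the terms are nonnegative) of these partial sums in K. *)
Definition Hbar_partial (A : zset) (N : Z) (x : pt) (K : nat) : R :=
  sumR (fun i =>
          if A (i, N) then 0
          else sumR (fun m => INR (paths_to A m (i, N) x) / 4 ^ m) (seq 0 (S K)))
       (zrange (- Z.of_nat K) (Z.of_nat K)).

Definition below_curve (alpha : R) (x : pt) : Prop :=
  (0 <= snd x)%Z /\ IZR (snd x) <= rpow (Rabs (IZR (fst x))) (1 / alpha).

Definition in_Bhat (alpha : R) (B : zset) (x : pt) : Prop :=
  B x = true /\ ~ below_curve alpha x.

Definition is_h0 (alpha : R) (B : zset) (h0 : Z) : Prop :=
  ((exists x, in_Bhat alpha B x) /\
     (exists x, in_Bhat alpha B x /\ snd x = h0) /\
     (forall x, in_Bhat alpha B x -> (snd x <= h0)%Z))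
  \/
  ((forall x, ~ in_Bhat alpha B x) /\
   let meets h := exists x : pt, B x = true /\
        (Z.abs (fst x) <= Zceil (rpow (IZR h) alpha))%Z /\ (0 <= snd x <= h)%Z in
   (0 <= h0)%Z /\ meets h0 /\ (forall h, (0 <= h < h0)%Z -> ~ meets h)).

Definition lh_bound (alpha : R) (h0 : Z) : Z := Zfloor (rpow (IZR h0) alpha).

Definition in_lh (alpha : R) (h0 : Z) : zset :=
  fun p => (Z.eqb (snd p) h0 && Z.leb (Z.abs (fst p)) (lh_bound alpha h0))%bool.

Definition setU (A C : zset) : zset := fun p => (A p || C p)%bool.

Definition total_partial (alpha : R) (B : zset) (h0 N : Z) (K : nat) : R :=
  sumR (fun i => Hbar_partial (setU B (in_lh alpha h0)) N (i, h0) K)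
       (zrange (- lh_bound alpha h0) (lh_bound alpha h0)).

(* Fix p with 1 + 1/p <= alpha and let Sd be the union, above height h0, of the slope-one cone
   and the cones |x_1| < M_k t (t = x_2 - h0) of slopes M_k = 2^k M_0, cut off below t = M_k^p.
   Since M_k t <= t^(1 + 1/p), Sd lies above the curve x_2 = |x_1|^(1/alpha), so by the choice
   of h0 it avoids B, l_h0 and L_0.  Reversing time, the harmonic measure of (0, h0) from L_N is
   at least 1/4 of G(0, h0 + 1), where G(x) is the expected number of visits to L_N of the walk
   from x before it leaves Sd.  G is harmonic in Sd except for a unit source on L_N, so by the
   maximum principle it dominates any subsolution vanishing off Sd.  Gluing one harmonic barrier
   a_k (t - M_k^p) + e_k (t^2 - x_1^2) per cone gives such a subsolution which is >= 1 at height
   M_0^p + 1 on the axis, uniformly in N; walking down the axis costs a factor 4 per step. *)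

From Pilot Require Import Defs.
From Stdlib Require Import Reals ZArith List Lia Lra Psatz.
Open Scope R_scope.

Section Sums.
Context {T : Type}.
Implicit Types (f g : T -> R) (l : list T).

Lemma sumR_ext f g l : (forall x, In x l -> f x = g x) -> sumR f l = sumR g l.
Proof.
  induction l as [|a l IH]; intros H; simpl; auto.
  rewrite H by (left; auto). rewrite IH by (intros x h; apply H; right; auto). reflexivity.
Qed.

Lemma sumR_le f g l : (forall x, In x l -> f x <= g x) -> sumR f l <= sumR g l.
Proof.
  induction l as [|a l IH]; intros H; simpl; [lra|].
  pose proof (H a (or_introl eq_refl)). pose proof (IH (fun x h => H x (or_intror h))). lra.
Qed.

Lemma sumR_plus f g l : sumR (fun x => f x + g x) l = sumR f l + sumR g l.
Proof. induction l as [|a l IH]; simpl; [lra|]. rewrite IH; lra. Qed.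

Lemma sumR_div f c l : sumR (fun x => f x / c) l = sumR f l / c.
Proof. induction l as [|a l IH]; simpl; unfold Rdiv in *; [lra|]. rewrite IH; lra. Qed.

Lemma sumR_mult_r f c l : sumR (fun x => f x * c) l = sumR f l * c.
Proof. induction l as [|a l IH]; simpl; [lra|]. rewrite IH; lra. Qed.

Lemma sumR_0 l : sumR (fun _ => 0) l = 0.
Proof. induction l as [|a l IH]; simpl; auto. rewrite IH; lra. Qed.

Lemma sumR_ge0 f l : (forall x, In x l -> 0 <= f x) -> 0 <= sumR f l.
Proof. intros H. rewrite <- (sumR_0 l). now apply sumR_le. Qed.

Lemma sumR_ge_term f l a : In a l -> (forall x, In x l -> 0 <= f x) -> f a <= sumR f l.
Proof.
  induction l as [|b l IH]; simpl; intros Ha H; [contradiction|].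
  pose proof (sumR_ge0 f l (fun x h => H x (or_intror h))).
  pose proof (H b (or_introl eq_refl)).
  destruct Ha as [<-|Ha]; [lra|]. pose proof (IH Ha (fun x h => H x (or_intror h))). lra.
Qed.

Lemma sumR_cons f a l : sumR f (a :: l) = f a + sumR f l.
Proof. reflexivity. Qed.

Lemma sumR_app f l1 l2 : sumR f (l1 ++ l2) = sumR f l1 + sumR f l2.
Proof. induction l1 as [|a l IH]; simpl; [lra|]. rewrite IH; lra. Qed.

Lemma sumR_map {U} (f : U -> R) (g : T -> U) l : sumR f (map g l) = sumR (fun x => f (g x)) l.
Proof. induction l as [|a l IH]; simpl; auto. now rewrite IH. Qed.

End Sums.

Lemma sumR_comm {T U} (F : T -> U -> R) (l : list T) (l' : list U) :
  sumR (fun i => sumR (F i) l') l = sumR (fun j => sumR (fun i => F i j) l) l'.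
Proof.
  induction l as [|a l IH].
  - exact (eq_sym (sumR_0 l')).
  - simpl. rewrite IH, <- sumR_plus. reflexivity.
Qed.

Lemma In_zrange a b c : In c (zrange a b) <-> (a <= c <= b)%Z.
Proof.
  unfold zrange. rewrite in_map_iff. split.
  - intros [k [<- Hk]]. apply in_seq in Hk. lia.
  - intros H. exists (Z.to_nat (c - a)). split; [lia|]. apply in_seq. lia.
Qed.

Lemma In_nbrs x n : In n (nbrs x) ->
  (Z.abs (fst n - fst x) <= 1 /\ snd x - 1 <= snd n <= snd x + 1)%Z.
Proof. destruct x as [a b]. simpl. intros [<-|[<-|[<-|[<-|[]]]]]; simpl; lia. Qed.

Definition nbr_mean (f : pt -> R) (x : pt) : R := sumR f (nbrs x) / 4.

Lemma nbr_mean_le f g x : (forall n, In n (nbrs x) -> f n <= g n) -> nbr_mean f x <= nbr_mean g x.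
Proof. intros H. unfold nbr_mean. apply Rmult_le_compat_r; [lra|]. now apply sumR_le. Qed.

Lemma nbr_mean_ge0 f x : (forall n, In n (nbrs x) -> 0 <= f n) -> 0 <= nbr_mean f x.
Proof. intros H. unfold nbr_mean. apply Rmult_le_pos; [now apply sumR_ge0 | lra]. Qed.

Lemma nbr_mean_minus f g x : nbr_mean (fun n => f n - g n) x = nbr_mean f x - nbr_mean g x.
Proof. destruct x as [a b]. unfold nbr_mean. simpl. lra. Qed.

Lemma nbr_mean_up f x : (forall n, 0 <= f n) -> f (fst x, snd x + 1)%Z <= 4 * nbr_mean f x.
Proof.
  intros H. destruct x as [a b]. unfold nbr_mean. simpl.
  pose proof (H (a + 1, b)%Z). pose proof (H (a - 1, b)%Z). pose proof (H (a, b - 1)%Z). lra.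
Qed.

(** * Paths, time reversal and visits to [L_N] *)

(* Paths to [n] that may take one more step: [n] itself must lie outside [A] and [L_0]. *)
Definition open_paths (A : zset) (m : nat) (z n : pt) : R :=
  if (A n || (snd n =? 0)%Z)%bool then 0 else INR (paths_to A m z n).

Lemma INR_fold_add {T} (f : T -> nat) l :
  INR (fold_right (fun y acc => (f y + acc)%nat) 0%nat l) = sumR (fun y => INR (f y)) l.
Proof. induction l as [|a l IH]; simpl; auto. now rewrite plus_INR, IH. Qed.

Lemma paths_to_first_step A m z x :
  INR (paths_to A (S m) z x) =
  if (A z || (snd z =? 0)%Z)%bool then 0 else sumR (fun y => INR (paths_to A m y x)) (nbrs z).
Proof. simpl. destruct (A z || (snd z =? 0)%Z)%bool; auto. apply INR_fold_add. Qed.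

Lemma eqb_shift a b c d : (a - b = c - d)%Z -> (a =? b)%Z = (c =? d)%Z.
Proof. intros. destruct (Z.eqb_spec a b), (Z.eqb_spec c d); auto; lia. Qed.

Lemma paths_to_last_step A m z x :
  INR (paths_to A (S m) z x) = sumR (open_paths A m z) (nbrs x).
Proof.
  revert z x. induction m as [|m IH]; intros z x.
  - rewrite paths_to_first_step. unfold open_paths.
    destruct z as [a b], x as [c d]. simpl.
    rewrite (eqb_shift (a + 1) c a (c - 1)), (eqb_shift (a - 1) c a (c + 1)),
      (eqb_shift (b + 1) d b (d - 1)), (eqb_shift (b - 1) d b (d + 1)) by lia.
    destruct (Z.eqb_spec a (c - 1)), (Z.eqb_spec a (c + 1)), (Z.eqb_spec a c),
      (Z.eqb_spec b (d - 1)), (Z.eqb_spec b (d + 1)), (Z.eqb_spec b d);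
      subst; try lia; simpl;
      repeat match goal with |- context [if ?c then _ else _] => destruct c end; simpl; lra.
  - rewrite paths_to_first_step.
    unfold open_paths at 1.
    transitivity (sumR (fun n => if (A n || (snd n =? 0)%Z)%bool then 0 else
      if (A z || (snd z =? 0)%Z)%bool then 0
      else sumR (fun y => INR (paths_to A m y n)) (nbrs z)) (nbrs x)).
    + destruct (A z || (snd z =? 0)%Z)%bool.
      * rewrite (sumR_ext _ (fun _ => 0)); [symmetry; apply sumR_0|].
        intros n _. destruct (_ || _)%bool; reflexivity.
      * rewrite (sumR_ext _ (fun y => sumR (open_paths A m y) (nbrs x))) by (intros; apply IH).
        rewrite sumR_comm. apply sumR_ext. intros n _. unfold open_paths.
        destruct (A n || (snd n =? 0)%Z)%bool; [apply sumR_0 | reflexivity].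
    + apply sumR_ext. intros n _. now rewrite paths_to_first_step.
Qed.

Lemma nbr_mean_sumR {T} (F : T -> pt -> R) l x :
  nbr_mean (fun n => sumR (fun j => F j n) l) x = sumR (fun j => nbr_mean (F j) x) l.
Proof. unfold nbr_mean. now rewrite sumR_div, sumR_comm. Qed.

Lemma Un_cv_const c : Un_cv (fun _ => c) c.
Proof. intros eps Heps. exists 0%nat. intros. unfold R_dist. now rewrite Rminus_diag, Rabs_R0. Qed.

Lemma Un_cv_ext u v l : (forall K, u K = v K) -> Un_cv u l -> Un_cv v l.
Proof. intros Huv H eps Heps. destruct (H eps Heps) as [K0 HK0]. exists K0. intros. rewrite <- Huv. auto. Qed.

Lemma Un_cv_S u l : Un_cv u l -> Un_cv (fun K => u (S K)) l.
Proof. intros H eps Heps. destruct (H eps Heps) as [K0 HK0]. exists K0. intros. apply HK0. lia. Qed.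

Lemma Un_cv_sumR {T} (u : nat -> T -> R) (v : T -> R) l :
  (forall x, In x l -> Un_cv (fun K => u K x) (v x)) ->
  Un_cv (fun K => sumR (u K) l) (sumR v l).
Proof.
  induction l as [|a l IH]; intros H; simpl.
  - apply Un_cv_const.
  - apply CV_plus; [apply H; left; auto | apply IH; intros; apply H; right; auto].
Qed.

Lemma Un_cv_nbr_mean (u : nat -> pt -> R) (v : pt -> R) x :
  (forall n, Un_cv (fun K => u K n) (v n)) -> Un_cv (fun K => nbr_mean (u K) x) (nbr_mean v x).
Proof. intros H. apply CV_mult; [apply Un_cv_sumR; auto | apply Un_cv_const]. Qed.

Section RowVisits.
Variable Sd : pt -> bool.
Variable N : Z.

(* [row_prob j x]: probability that the walk from [x] stays in [Sd] up to time [j]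
   and is on the row [L_N] at time [j]. *)
Fixpoint row_prob (j : nat) (x : pt) : R :=
  match j with
  | O => if (Sd x && (snd x =? N)%Z)%bool then 1 else 0
  | S j' => if Sd x then nbr_mean (row_prob j') x else 0
  end.

Definition row_visits (K : nat) (x : pt) : R := sumR (fun j => row_prob j x) (seq 0 (S K)).

Lemma row_prob_ge0 j x : 0 <= row_prob j x.
Proof.
  revert x; induction j as [|j IH]; intros x; simpl.
  - destruct (_ && _)%bool; lra.
  - destruct (Sd x); [apply nbr_mean_ge0; auto | lra].
Qed.

Lemma row_prob_out j x : Sd x = false -> row_prob j x = 0.
Proof. intros H. destruct j; simpl; now rewrite H. Qed.

Lemma row_visits_ge0 K x : 0 <= row_visits K x.
Proof. apply sumR_ge0. intros; apply row_prob_ge0. Qed.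

Lemma row_visits_le_S K x : row_visits K x <= row_visits (S K) x.
Proof.
  unfold row_visits. rewrite (seq_S (S K)), sumR_app. simpl.
  pose proof (row_prob_ge0 (S K) x). simpl in *. lra.
Qed.

Lemma row_visits_S K x :
  row_visits (S K) x = row_prob 0 x + (if Sd x then nbr_mean (row_visits K) x else 0).
Proof.
  unfold row_visits at 1. change (seq 0 (S (S K))) with (0%nat :: seq 1 (S K)).
  rewrite sumR_cons, <- seq_shift, sumR_map. f_equal.
  destruct (Sd x) eqn:Hx.
  - unfold row_visits. rewrite nbr_mean_sumR. apply sumR_ext. intros j _. simpl. now rewrite Hx.
  - rewrite (sumR_ext _ (fun _ => 0)) by (intros j _; simpl; now rewrite Hx). apply sumR_0.
Qed.

Section Reversal.
Variable A : zset.
Hypothesis Sd_open : forall n, Sd n = true -> (A n || (snd n =? 0)%Z)%bool = false.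

Definition row_count (K : Z) (j : nat) (y : pt) : R :=
  sumR (fun i => if A (i, N) then 0 else INR (paths_to A j (i, N) y)) (zrange (- K) K).

Lemma row_count_ge0 K j y : 0 <= row_count K j y.
Proof. apply sumR_ge0. intros i _. destruct (A (i, N)); [lra | apply pos_INR]. Qed.

Lemma row_count_S K j y :
  row_count K (S j) y = sumR (fun n => if (A n || (snd n =? 0)%Z)%bool then 0 else row_count K j n) (nbrs y).
Proof.
  unfold row_count.
  rewrite (sumR_ext _ (fun i => sumR (fun n => if A (i, N) then 0 else open_paths A j (i, N) n) (nbrs y))).
  - rewrite sumR_comm. apply sumR_ext. intros n _. unfold open_paths.
    destruct (A n || (snd n =? 0)%Z)%bool.
    + rewrite (sumR_ext _ (fun _ => 0)); [apply sumR_0|]. intros i _. now destruct (A (i, N)).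
    + reflexivity.
  - intros i _. destruct (A (i, N)); [symmetry; apply sumR_0 | apply paths_to_last_step].
Qed.

(* Time reversal: a path from [x] to the row inside [Sd] is a path from the row to [x]. *)
Lemma row_prob_le_count K j y : (Z.abs (fst y) + Z.of_nat j <= K)%Z ->
  row_prob j y * 4 ^ j <= (if (A y || (snd y =? 0)%Z)%bool then 0 else row_count K j y).
Proof.
  revert y; induction j as [|j IH]; intros y Hy.
  - simpl. destruct (Sd y) eqn:Hs; simpl; [|pose proof (row_count_ge0 K 0 y); destruct (_ || _)%bool; lra].
    rewrite (Sd_open y Hs).
    destruct (Z.eqb_spec (snd y) N) as [HN|]; [|apply Rle_trans with 0; [lra | apply row_count_ge0]].
    destruct y as [a b]; simpl in *; subst b.
    rewrite Rmult_1_r. unfold row_count.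
    replace 1 with (if A (a, N) then 0 else INR (paths_to A 0 (a, N) (a, N)))
      by (pose proof (Sd_open _ Hs) as HA; apply Bool.orb_false_iff in HA as [-> _];
          simpl; now rewrite !Z.eqb_refl).
    apply (sumR_ge_term (fun i => if A (i, N) then 0 else INR (paths_to A 0 (i, N) (a, N)))).
    + apply In_zrange. lia.
    + intros i _. destruct (A (i, N)); [lra | apply pos_INR].
  - simpl row_prob.
    destruct (Sd y) eqn:Hs; [|rewrite Rmult_0_l; destruct (_ || _)%bool; [lra | apply row_count_ge0]].
    rewrite (Sd_open y Hs), row_count_S. unfold nbr_mean. change (4 ^ S j) with (4 * 4 ^ j).
    replace (sumR (row_prob j) (nbrs y) / 4 * (4 * 4 ^ j))
      with (sumR (fun n => row_prob j n * 4 ^ j) (nbrs y)) by (rewrite sumR_mult_r; field).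
    apply sumR_le. intros n Hn. apply IH. apply In_nbrs in Hn. lia.
Qed.

Lemma Hbar_partial_row_count w K :
  Hbar_partial A N w K = sumR (fun m => row_count (Z.of_nat K) m w / 4 ^ m) (seq 0 (S K)).
Proof.
  unfold Hbar_partial, row_count.
  rewrite (sumR_ext _ (fun i => sumR (fun m =>
    (if A (i, N) then 0 else INR (paths_to A m (i, N) w)) / 4 ^ m) (seq 0 (S K)))).
  - rewrite sumR_comm. apply sumR_ext. intros m _. now rewrite sumR_div.
  - intros i _. destruct (A (i, N)); [|reflexivity].
    symmetry. rewrite (sumR_ext _ (fun _ => 0)); [apply sumR_0|]. intros; unfold Rdiv; lra.
Qed.

Lemma row_visits_le_Hbar h K : / 4 * row_visits K (0, h + 1)%Z <= Hbar_partial A N (0, h)%Z (S K).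
Proof.
  rewrite Hbar_partial_row_count. change (seq 0 (S (S K))) with (0%nat :: seq 1 (S K)).
  rewrite sumR_cons, <- seq_shift, sumR_map.
  set (up := (0, h + 1)%Z). set (Kz := Z.of_nat (S K)).
  assert (0 <= row_count Kz 0 (0, h)%Z / 4 ^ 0)
    by (rewrite pow_O; unfold Rdiv; rewrite Rinv_1, Rmult_1_r; apply row_count_ge0).
  enough (/ 4 * row_visits K up <=
          sumR (fun j => row_count Kz (S j) (0, h)%Z / 4 ^ S j) (seq 0 (S K))) by lra.
  unfold row_visits. rewrite Rmult_comm, <- sumR_mult_r. apply sumR_le. intros j Hj. apply in_seq in Hj.
  assert (Hup : (if (A up || (snd up =? 0)%Z)%bool then 0 else row_count Kz j up)
                <= row_count Kz (S j) (0, h)%Z).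
  { rewrite row_count_S.
    apply (sumR_ge_term (fun n => if (A n || (snd n =? 0)%Z)%bool then 0 else row_count Kz j n)).
    - simpl. auto.
    - intros n _. destruct (_ || _)%bool; [lra | apply row_count_ge0]. }
  pose proof (row_prob_le_count Kz j up ltac:(simpl; lia)).
  pose proof (pow_lt 4 j ltac:(lra)). simpl pow.
  apply (Rmult_le_reg_r (4 * 4 ^ j)); [lra|]. field_simplify; lra.
Qed.

End Reversal.

End RowVisits.

Section Green.
Variables (Sd : pt -> bool) (N L0 : Z).
Hypothesis Sd_above : forall x, Sd x = true -> (L0 < snd x)%Z.
Hypothesis N_above : (L0 < N)%Z.

Definition visits_bound (x : pt) : R := 4 * IZR (Z.min (snd x - L0) (N - L0)).

Lemma visits_bound_eq x : (L0 < snd x)%Z ->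
  visits_bound x = (if (snd x =? N)%Z then 1 else 0) + nbr_mean visits_bound x.
Proof.
  destruct x as [a b]; simpl; intros H. unfold nbr_mean, visits_bound; simpl.
  destruct (Z.eqb_spec b N); destruct (Z_lt_le_dec b N); try lia;
    repeat match goal with |- context [Z.min ?u ?v] =>
      first [rewrite (Z.min_l u v) by lia | rewrite (Z.min_r u v) by lia] end;
    try subst; rewrite ?minus_IZR, ?plus_IZR; lra.
Qed.

Lemma row_visits_le_bound K x : Sd x = true -> row_visits Sd N K x <= visits_bound x.
Proof.
  revert x; induction K as [|K IH]; intros x Hx; pose proof (Sd_above x Hx).
  - unfold row_visits; simpl. rewrite Hx. unfold visits_bound.
    assert (1 <= IZR (Z.min (snd x - L0) (N - L0))) by (apply IZR_le; lia).
    destruct (snd x =? N)%Z; simpl; lra.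
  - rewrite row_visits_S, visits_bound_eq by lia. simpl. rewrite Hx. simpl.
    apply Rplus_le_compat_l, nbr_mean_le. intros n Hn. apply In_nbrs in Hn.
    destruct (Sd n) eqn:Hsn; [auto|].
    unfold row_visits. rewrite (sumR_ext _ (fun _ => 0)) by (intros; apply row_prob_out; auto).
    rewrite sumR_0. unfold visits_bound. apply Rmult_le_pos; [lra | apply IZR_le; lia].
Qed.

Lemma row_visits_cv : exists V : pt -> R, forall x, Un_cv (fun K => row_visits Sd N K x) (V x).
Proof.
  assert (Hub : forall x, has_ub (fun K => row_visits Sd N K x)).
  { intros x. exists (Rabs (visits_bound x)). intros r [K ->].
    destruct (Sd x) eqn:Hx.
    - pose proof (row_visits_le_bound K x Hx). pose proof (Rle_abs (visits_bound x)). lra.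
    - unfold row_visits. rewrite (sumR_ext _ (fun _ => 0)) by (intros; apply row_prob_out; auto).
      rewrite sumR_0. apply Rabs_pos. }
  exists (fun x => proj1_sig (growing_cv _ (fun K => row_visits_le_S Sd N K x) (Hub x))).
  intros x. now destruct (growing_cv _ _ _).
Qed.

End Green.

Section GreenEquation.
Variables (Sd : pt -> bool) (N : Z) (V : pt -> R).
Hypothesis V_lim : forall x, Un_cv (fun K => row_visits Sd N K x) (V x).

Lemma row_visits_le_lim K x : row_visits Sd N K x <= V x.
Proof. apply (growing_ineq (fun K => row_visits Sd N K x)); [intro; apply row_visits_le_S | apply V_lim]. Qed.

Lemma green_ge0 x : 0 <= V x.
Proof. pose proof (row_visits_le_lim 0 x). pose proof (row_visits_ge0 Sd N 0 x). lra. Qed.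

Lemma green_eq x : Sd x = true -> V x = (if (snd x =? N)%Z then 1 else 0) + nbr_mean V x.
Proof.
  intros Hx. apply (UL_sequence (fun K => row_visits Sd N (S K) x)).
  - apply (Un_cv_S (fun K => row_visits Sd N K x)), V_lim.
  - apply (Un_cv_ext (fun K => (if (snd x =? N)%Z then 1 else 0) + nbr_mean (row_visits Sd N K) x)).
    + intros K. rewrite row_visits_S. simpl. now rewrite Hx.
    + apply CV_plus; [apply Un_cv_const | now apply Un_cv_nbr_mean].
Qed.

End GreenEquation.

(** * Maximum principle *)

Lemma argmin_list {T} (f : T -> R) l : l <> nil -> exists x, In x l /\ forall y, In y l -> f x <= f y.
Proof.
  induction l as [|a l IH]; intros H; [congruence|].
  destruct l as [|b l].
  - exists a. split; [now left|]. intros y [<-|[]]. lra.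
  - destruct IH as [x [Hx Hm]]; [discriminate|].
    destruct (Rle_dec (f a) (f x)).
    + exists a. split; [now left|]. intros y [<-|Hy]; [lra|]. specialize (Hm y Hy). lra.
    + exists x. split; [now right|]. intros y [<-|Hy]; [lra | auto].
Qed.

Lemma nbr_mean_min_up f x m :
  (forall n, m <= f n) -> nbr_mean f x <= m -> f (fst x, snd x + 1)%Z <= m.
Proof.
  intros Hm H. destruct x as [a b]. unfold nbr_mean in H. simpl in *.
  pose proof (Hm (a + 1, b)%Z). pose proof (Hm (a - 1, b)%Z). pose proof (Hm (a, b - 1)%Z). lra.
Qed.

Section Comparison.
Variables (Sd : pt -> bool) (src u V : pt -> R) (L0 T C : Z).
Hypothesis Sd_above : forall x, Sd x = true -> (L0 < snd x)%Z.
Hypothesis Sd_bounded : forall x, Sd x = true -> (snd x < T)%Z -> (Z.abs (fst x) <= C)%Z.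
Hypothesis u_sub : forall x, Sd x = true -> u x <= nbr_mean u x + src x.
Hypothesis V_super : forall x, Sd x = true -> nbr_mean V x + src x <= V x.
Hypothesis V_ge0 : forall x, 0 <= V x.
Hypothesis u_out : forall x, Sd x = false -> u x <= 0.
Hypothesis u_high : forall x, (T <= snd x)%Z -> u x <= 0.

(* Discrete maximum principle: [V - u] attains a negative minimum on the finite part of
   [Sd] below height [T], and the minimum then propagates upwards to height [T]. *)
Lemma subsolution_le_supersolution x : u x <= V x.
Proof.
  set (W := fun y => V y - u y).
  set (box := list_prod (zrange (- C) C) (zrange (L0 + 1) (T - 1))).
  assert (Hneg : forall y, W y < 0 -> Sd y = true /\ In y box).
  { intros y Hy. unfold W in Hy. pose proof (V_ge0 y).
    destruct (Sd y) eqn:Hs; [|pose proof (u_out y Hs); lra].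
    destruct (Z_lt_le_dec (snd y) T) as [Ht|Ht]; [|pose proof (u_high y Ht); lra].
    pose proof (Sd_bounded y Hs Ht). pose proof (Sd_above y Hs).
    split; auto. destruct y as [a b]. apply in_prod; apply In_zrange; simpl in *; lia. }
  destruct (Rle_dec (u x) (V x)) as [|Hx]; auto. exfalso.
  assert (Hwx : W x < 0) by (unfold W; lra).
  destruct (argmin_list W box) as [xs [Hin Hmin]].
  { destruct (Hneg x Hwx) as [_ H]. now destruct box. }
  assert (Hxs : W xs < 0) by (pose proof (Hmin x (proj2 (Hneg x Hwx))); lra).
  assert (Hge : forall n, W xs <= W n).
  { intros n. destruct (Rlt_le_dec (W n) 0); [apply Hmin, Hneg | lra]; auto. }
  assert (Hup : forall z, W z <= W xs -> W (fst z, snd z + 1)%Z <= W xs).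
  { intros z Hz. apply nbr_mean_min_up; auto.
    destruct (Hneg z ltac:(pose proof (Hge z); lra)) as [Hs _].
    pose proof (u_sub z Hs). pose proof (V_super z Hs).
    unfold W in *. rewrite nbr_mean_minus. lra. }
  assert (Hcol : forall j : nat, W (fst xs, snd xs + Z.of_nat j)%Z <= W xs).
  { induction j as [|j IH].
    - simpl Z.of_nat. rewrite Z.add_0_r. destruct xs as [a b]. apply Rle_refl.
    - replace (snd xs + Z.of_nat (S j))%Z with (snd (fst xs, snd xs + Z.of_nat j)%Z + 1)%Z by (simpl; lia).
      exact (Hup _ IH). }
  pose proof (Hcol (Z.to_nat (T - snd xs))).
  set (top := (fst xs, snd xs + Z.of_nat (Z.to_nat (T - snd xs)))%Z) in *.
  pose proof (u_high top ltac:(simpl; lia)). pose proof (V_ge0 top).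
  unfold W in *. lra.
Qed.

End Comparison.

(** * Widening cones *)

Section Cones.
Variable p : nat.

Definition cone_ratio : Z := (2 ^ Z.of_nat p)%Z.
(* The offset [4 * cone_ratio + 16] makes [half_slope] hold, as needed by [cone_barrier_le_S]. *)
Definition slope (k : nat) : Z := (2 ^ Z.of_nat k * (4 * cone_ratio + 16))%Z.
Definition base (k : nat) : Z := (slope k ^ Z.of_nat p)%Z.
Definition cone_top (k : nat) : Z := (base k * slope k)%Z.

Lemma cone_ratio_ge1 : (1 <= cone_ratio)%Z.
Proof. unfold cone_ratio. pose proof (Z.pow_pos_nonneg 2 (Z.of_nat p)). lia. Qed.

Lemma slope_S k : slope (S k) = (2 * slope k)%Z.
Proof. unfold slope. rewrite Nat2Z.inj_succ, Z.pow_succ_r by lia. ring. Qed.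

Lemma slope_ge k : (4 * cone_ratio + 16 <= slope k)%Z.
Proof.
  induction k as [|k IH]; [unfold slope; rewrite Z.pow_0_r; lia|].
  rewrite slope_S. pose proof cone_ratio_ge1. lia.
Qed.

Lemma slope_mono j k : (j <= k)%nat -> (slope j <= slope k)%Z.
Proof.
  induction 1 as [|k _ IH]; [lia|].
  rewrite slope_S. pose proof (slope_ge k). pose proof cone_ratio_ge1. lia.
Qed.

Lemma base_S k : base (S k) = (cone_ratio * base k)%Z.
Proof. unfold base, cone_ratio. rewrite slope_S, Z.pow_mul_l. reflexivity. Qed.

Lemma base_ge1 k : (1 <= base k)%Z.
Proof.
  unfold base. pose proof (slope_ge k). pose proof cone_ratio_ge1.
  pose proof (Z.pow_le_mono_l 1 (slope k) (Z.of_nat p) ltac:(lia)).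
  rewrite Z.pow_1_l in * by lia. lia.
Qed.

Lemma cone_top_lt_S k : (cone_top k < cone_top (S k))%Z.
Proof.
  unfold cone_top. rewrite base_S, slope_S.
  pose proof (base_ge1 k). pose proof (slope_ge k). pose proof cone_ratio_ge1.
  assert (0 < base k * slope k)%Z by (apply Z.mul_pos_pos; lia).
  replace (cone_ratio * base k * (2 * slope k))%Z with (2 * cone_ratio * (base k * slope k))%Z by ring.
  nia.
Qed.

Lemma cone_top_mono j k : (j <= k)%nat -> (cone_top j <= cone_top k)%Z.
Proof. induction 1 as [|k _ IH]; [lia|]. pose proof (cone_top_lt_S k). lia. Qed.

Lemma cone_top_ge k : (Z.of_nat k <= cone_top k)%Z.
Proof.
  induction k as [|k IH].
  - unfold cone_top. pose proof (base_ge1 0). pose proof (slope_ge 0). pose proof cone_ratio_ge1. simpl. nia.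
  - pose proof (cone_top_lt_S k). lia.
Qed.

Lemma base0_lt_cone_top0 : (base 0 + 1 < cone_top 0)%Z.
Proof. unfold cone_top. pose proof (base_ge1 0). pose proof (slope_ge 0). pose proof cone_ratio_ge1. nia. Qed.

Lemma IZR_cone_constants k :
  1 <= IZR cone_ratio /\ 20 <= IZR (slope k) /\ 1 <= IZR (base k) /\
  IZR (slope (S k)) = 2 * IZR (slope k) /\ IZR (base (S k)) = IZR cone_ratio * IZR (base k) /\
  IZR (cone_top k) = IZR (base k) * IZR (slope k).
Proof.
  pose proof cone_ratio_ge1. pose proof (slope_ge k). pose proof (base_ge1 k).
  repeat split; try (apply IZR_le; lia).
  - now rewrite slope_S, mult_IZR.
  - now rewrite base_S, mult_IZR.
  - unfold cone_top. now rewrite mult_IZR.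
Qed.

Lemma half_slope k : (/ 2) ^ S k * IZR (slope k) = 2 * IZR cone_ratio + 8.
Proof.
  unfold slope. rewrite mult_IZR, <- pow_IZR, plus_IZR, mult_IZR. simpl.
  replace (/ 2 * (/ 2) ^ k * (2 ^ k * (4 * IZR cone_ratio + 16)))
    with (/ 2 * (4 * IZR cone_ratio + 16) * ((/ 2) ^ k * 2 ^ k)) by ring.
  rewrite <- Rpow_mult_distr, Rinv_l, pow1 by lra. field.
Qed.

Variables (K : nat) (h0 : Z).

(* The union of the slope-one cone and the cones [|x_1| < slope k * t], [t >= base k], [k <= K],
   in the coordinates [t = x_2 - h0]. *)
Definition in_cones (x : pt) : bool :=
  let s := fst x in let t := (snd x - h0)%Z in
  ((1 <=? t) && ((s * s <? t * t) ||
     existsb (fun k => (base k <=? t) && (s * s <? t * t * (slope k * slope k))) (seq 0 (S K))))%Z%bool.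

Lemma in_cones_above x : in_cones x = true -> (h0 < snd x)%Z.
Proof. unfold in_cones. intros H. apply andb_prop in H as [H _]. apply Z.leb_le in H. lia. Qed.

Lemma in_cones_axis t : (1 <= t)%Z -> in_cones (0%Z, h0 + t)%Z = true.
Proof.
  intros Ht. unfold in_cones. simpl. apply andb_true_intro. split; [apply Z.leb_le; lia|].
  apply Bool.orb_true_iff. left. apply Z.ltb_lt. nia.
Qed.

Lemma in_cones_slope x : in_cones x = true ->
  exists m, (1 <= m <= slope K)%Z /\ (m ^ Z.of_nat p <= snd x - h0)%Z /\
            (Z.abs (fst x) < (snd x - h0) * m)%Z.
Proof.
  unfold in_cones. set (s := fst x). set (t := (snd x - h0)%Z).
  intros H. apply andb_prop in H as [Ht H]. apply Z.leb_le in Ht.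
  assert (Hm : exists m, (1 <= m <= slope K)%Z /\ (m ^ Z.of_nat p <= t)%Z /\ (s * s < (t * m) * (t * m))%Z).
  { apply Bool.orb_true_iff in H as [H|H].
    - exists 1%Z. apply Z.ltb_lt in H. rewrite Z.pow_1_l by lia.
      pose proof (slope_ge K). pose proof cone_ratio_ge1. repeat split; lia.
    - apply existsb_exists in H as [k [Hk H]]. apply in_seq in Hk.
      apply andb_prop in H as [Hb H]. apply Z.leb_le in Hb. apply Z.ltb_lt in H.
      exists (slope k). pose proof (slope_ge k). pose proof cone_ratio_ge1.
      pose proof (slope_mono k K ltac:(lia)). unfold base in Hb.
      repeat split; try lia. }
  destruct Hm as [m [Hm [Hmp Hs]]]. exists m. repeat split; try lia.
  apply Z.square_lt_simpl_nonneg; [nia|]. now rewrite Z.abs_square.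
Qed.

End Cones.

Section Barrier.
Variables (p K : nat) (h0 : Z).

Definition barrier_slope (k : nat) : R := 2 - (/ 2) ^ k.
Definition barrier_curv (k : nat) : R := 8 / (IZR (base p k) * IZR (slope p k) ^ 2).

(* Harmonic; its quadratic part makes it nonpositive outside cone [k], and the constants are
   tuned so that it is dominated by the next barrier on the top [t = cone_top k] of cone [k]. *)
Definition cone_barrier (k : nat) (x : pt) : R :=
  barrier_slope k * (IZR (snd x - h0) - IZR (base p k)) +
  barrier_curv k * (IZR (snd x - h0) ^ 2 - IZR (fst x) ^ 2).

Lemma barrier_slope_bounds k : 1 <= barrier_slope k <= 2.
Proof.
  unfold barrier_slope. pose proof (pow_lt (/ 2) k ltac:(lra)).
  assert ((/ 2) ^ k <= 1) by (rewrite <- (pow1 k); apply pow_incr; lra). lra.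
Qed.

Lemma barrier_slope_S k : barrier_slope (S k) = barrier_slope k + (/ 2) ^ S k.
Proof. unfold barrier_slope. simpl. lra. Qed.

Lemma barrier_curv_pos k : 0 < barrier_curv k.
Proof.
  destruct (IZR_cone_constants p k) as [_ [HM [HB _]]].
  apply Rdiv_lt_0_compat; [lra|]. apply Rmult_lt_0_compat; [lra | apply pow_lt; lra].
Qed.

Lemma cone_barrier_harmonic k x : cone_barrier k x = nbr_mean (cone_barrier k) x.
Proof. destruct x as [a b]. unfold nbr_mean, cone_barrier. simpl. rewrite !minus_IZR, !plus_IZR. field. Qed.

Lemma cone_barrier_outside k x : (k <= K)%nat -> in_cones p K h0 x = false -> (0 <= snd x - h0)%Z ->
  cone_barrier k x <= 0.
Proof.
  intros Hk Hx Ht. unfold in_cones in Hx. unfold cone_barrier.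
  set (s := fst x) in *. set (t := (snd x - h0)%Z) in *.
  destruct (IZR_cone_constants p k) as [Hc [HM [HB _]]].
  pose proof (barrier_slope_bounds k). pose proof (barrier_curv_pos k).
  set (a := barrier_slope k) in *. set (Br := IZR (base p k)) in *. set (Mr := IZR (slope p k)) in *.
  assert (He : barrier_curv k * Br * Mr ^ 2 = 8) by (unfold barrier_curv; fold Br Mr; field; nra).
  set (e := barrier_curv k) in *.
  destruct (Z.eq_dec t 0) as [Ht0|Ht0].
  - rewrite Ht0. simpl. nra.
  - rewrite (proj2 (Z.leb_le 1 t)), Bool.andb_true_l in Hx by lia.
    apply Bool.orb_false_iff in Hx as [H1 H2]. apply Z.ltb_ge in H1.
    assert (Hst : IZR t ^ 2 <= IZR s ^ 2) by (rewrite !pow_IZR; apply IZR_le; simpl; lia).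
    assert (Htr : 1 <= IZR t) by (apply IZR_le; lia).
    destruct (Rlt_le_dec (IZR t) Br) as [Hlt|Hge]; [nra|].
    assert (Hsm : IZR t ^ 2 * Mr ^ 2 <= IZR s ^ 2).
    { destruct (Z.ltb_spec (s * s) (t * t * (slope p k * slope p k))) as [Hlt|Hle].
      - exfalso. apply le_IZR in Hge.
        assert (Hin : existsb (fun j =>
                   ((base p j <=? t) && (s * s <? t * t * (slope p j * slope p j)))%Z%bool)
                              (seq 0 (S K)) = true).
        { apply existsb_exists. exists k. split; [apply in_seq; lia|].
          apply andb_true_intro. split; [apply Z.leb_le | apply Z.ltb_lt]; auto. }
        congruence.
      - unfold Mr. rewrite !pow_IZR, <- mult_IZR. apply IZR_le. simpl. lia. }
    assert (e * IZR t * (Mr ^ 2 - 1) >= 2).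
    { assert (e * Br <= 1) by nra. nra. }
    nra.
Qed.

Lemma cone_barrier_le_S k x : (snd x - h0 = cone_top p k)%Z -> cone_barrier k x <= cone_barrier (S k) x.
Proof.
  intros Ht. unfold cone_barrier, barrier_curv. rewrite Ht.
  destruct (IZR_cone_constants p k) as [Hc [HM [HB [HMS [HBS HT]]]]].
  rewrite HT, HMS, HBS, barrier_slope_S.
  pose proof (half_slope p k) as Hh.
  pose proof (barrier_slope_bounds k).
  pose proof (barrier_slope_bounds (S k)) as Ha'. rewrite barrier_slope_S in Ha'.
  set (a := barrier_slope k) in *. set (h := (/ 2) ^ S k) in *. set (B := IZR (base p k)) in *.
  set (M := IZR (slope p k)) in *. set (c := IZR (cone_ratio p)) in *. set (s := IZR (fst x)).
  set (e := 8 / (B * M ^ 2)). set (e' := 8 / (c * B * (2 * M) ^ 2)).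
  assert (Hid : (a + h) * (B * M - c * B) + e' * ((B * M) ^ 2 - s ^ 2) -
     (a * (B * M - B) + e * ((B * M) ^ 2 - s ^ 2)) =
     B * (h * M - 2 * c - 8) + B * (c * (2 - (a + h)) + a) + e' * (B * M) ^ 2 + (e - e') * s ^ 2).
  { unfold e, e'. field. split; nra. }
  assert (0 < B * M ^ 2) by (apply Rmult_lt_0_compat; [lra | apply pow_lt; lra]).
  assert (Hee : e' <= e).
  { unfold e, e', Rdiv. apply Rmult_le_compat_l; [lra|]. apply Rinv_le_contravar; [nra|].
    replace (c * B * (2 * M) ^ 2) with (4 * c * (B * M ^ 2)) by ring. nra. }
  assert (0 <= e') by (unfold e'; apply Rlt_le, Rdiv_lt_0_compat; nra).
  assert (0 <= e' * (B * M) ^ 2) by (apply Rmult_le_pos; [lra | apply pow2_ge_0]).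
  assert (0 <= (e - e') * s ^ 2) by (apply Rmult_le_pos; [lra | apply pow2_ge_0]).
  assert (0 <= B * (c * (2 - (a + h)) + a)) by (apply Rmult_le_pos; nra).
  rewrite Hh in Hid. lra.
Qed.

Lemma cone_barrier_top N x : (snd x - h0 = cone_top p K)%Z -> (4 * (N - h0) <= cone_top p K)%Z ->
  cone_barrier K x <= 4 * IZR (snd x - N).
Proof.
  intros Ht HN. unfold cone_barrier, barrier_curv. rewrite Ht.
  destruct (IZR_cone_constants p K) as [Hc [HM [HB [_ [_ HT]]]]]. rewrite HT.
  replace (snd x - N)%Z with (cone_top p K - (N - h0))%Z by lia.
  rewrite minus_IZR. apply IZR_le in HN. rewrite mult_IZR, HT in HN.
  pose proof (barrier_slope_bounds K).
  set (B := IZR (base p K)) in *. set (M := IZR (slope p K)) in *.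
  assert (8 / (B * M ^ 2) * (B * M) ^ 2 = 8 * B) by (field; nra).
  assert (0 <= 8 / (B * M ^ 2) * IZR (fst x) ^ 2)
    by (apply Rmult_le_pos; [apply Rlt_le, Rdiv_lt_0_compat; nra | nra]).
  assert (8 * B <= B * M) by nra.
  set (a := barrier_slope K) in *. set (q := IZR (N - h0)) in *. nra.
Qed.

End Barrier.

Definition maxR (d : R) (l : list R) : R := fold_right Rmax d l.

Lemma maxR_ge_default d l : d <= maxR d l.
Proof. induction l as [|a l IH]; simpl; [lra|]. eapply Rle_trans; [apply IH | apply Rmax_r]. Qed.

Lemma maxR_ge_In d l r : In r l -> r <= maxR d l.
Proof.
  induction l as [|a l IH]; simpl; [tauto|]. intros [<-|Hr]; [apply Rmax_l|].
  eapply Rle_trans; [apply IH, Hr | apply Rmax_r].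
Qed.

Lemma maxR_le d l X : d <= X -> (forall r, In r l -> r <= X) -> maxR d l <= X.
Proof.
  induction l as [|a l IH]; simpl; intros Hd Hl; auto.
  apply Rmax_lub; [apply Hl; auto | apply IH; auto].
Qed.

Section Subsolution.
Variables (p K : nat) (h0 N : Z).
Hypothesis top_high : (4 * (N - h0) <= cone_top p K)%Z.

Definition in_cone_below (k : nat) (x : pt) : bool :=
  (in_cones p K h0 x && (snd x - h0 <? cone_top p k))%Z%bool.

Definition barrier_piece (k : nat) (x : pt) : R :=
  if in_cone_below k x then cone_barrier p h0 k x else 0.

Definition glued_barrier (x : pt) : R :=
  maxR (Rmax 0 (4 * IZR (snd x - N))) (map (fun k => barrier_piece k x) (seq 0 (S K))).

(* Carries the unit source on [L_N], and cancels the row term of [glued_barrier] off the cones. *)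
Definition row_correction (x : pt) : R := - 4 * IZR (Z.max 0 (snd x - N)).

Definition subsolution (x : pt) : R := row_correction x + glued_barrier x.

Lemma glued_barrier_ge0 x : 0 <= glued_barrier x.
Proof. eapply Rle_trans; [apply Rmax_l | apply maxR_ge_default]. Qed.

Lemma glued_barrier_ge_row x : 4 * IZR (snd x - N) <= glued_barrier x.
Proof. eapply Rle_trans; [apply Rmax_r | apply maxR_ge_default]. Qed.

Lemma glued_barrier_ge_piece k x : (k <= K)%nat -> barrier_piece k x <= glued_barrier x.
Proof. intros Hk. apply maxR_ge_In, (in_map (fun k => barrier_piece k x)), in_seq. lia. Qed.

(* Inside the truncated cone [k] the barrier is a piece, outside the cones it is nonpositive, and on
   the top face it is dominated by the next piece, or by the row term for the last cone. *)
Lemma glued_barrier_ge_barrier k x : (k <= K)%nat -> (0 <= snd x - h0 <= cone_top p k)%Z ->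
  cone_barrier p h0 k x <= glued_barrier x.
Proof.
  intros Hk Ht. pose proof (glued_barrier_ge_piece k x Hk) as Hpiece. unfold barrier_piece in Hpiece.
  destruct (in_cone_below k x) eqn:HD; auto.
  unfold in_cone_below in HD. destruct (in_cones p K h0 x) eqn:Hin.
  - simpl in HD. apply Z.ltb_ge in HD. assert (Htop : (snd x - h0 = cone_top p k)%Z) by lia.
    destruct (Nat.eq_dec k K) as [->|Hne].
    + pose proof (cone_barrier_top p K h0 N x Htop top_high). pose proof (glued_barrier_ge_row x). lra.
    + pose proof (cone_barrier_le_S p h0 k x Htop).
      pose proof (glued_barrier_ge_piece (S k) x ltac:(lia)) as HS. unfold barrier_piece in HS.
      replace (in_cone_below (S k) x) with true in HS; [lra|].
      symmetry. unfold in_cone_below. rewrite Hin. apply Z.ltb_lt. pose proof (cone_top_lt_S p k). lia.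
  - pose proof (cone_barrier_outside p K h0 k x Hk Hin ltac:(lia)). pose proof (glued_barrier_ge0 x). lra.
Qed.

Lemma glued_barrier_sub x : glued_barrier x <= nbr_mean glued_barrier x.
Proof.
  assert (Hmean0 : 0 <= nbr_mean glued_barrier x) by (apply nbr_mean_ge0; intros; apply glued_barrier_ge0).
  apply maxR_le; [apply Rmax_lub; auto|].
  - replace (4 * IZR (snd x - N)) with (nbr_mean (fun n => 4 * IZR (snd n - N)) x)
      by (destruct x as [a b]; unfold nbr_mean; simpl; rewrite !minus_IZR, !plus_IZR; field).
    apply nbr_mean_le. intros; apply glued_barrier_ge_row.
  - intros r Hr. apply in_map_iff in Hr as [k [<- Hk]]. apply in_seq in Hk.
    unfold barrier_piece. destruct (in_cone_below k x) eqn:HD; auto.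
    unfold in_cone_below in HD. apply andb_prop in HD as [Hin Htop]. apply Z.ltb_lt in Htop.
    pose proof (in_cones_above p K h0 x Hin).
    rewrite cone_barrier_harmonic. apply nbr_mean_le. intros n Hn. apply In_nbrs in Hn.
    apply glued_barrier_ge_barrier; lia.
Qed.

Lemma row_correction_eq x :
  row_correction x = nbr_mean row_correction x + (if (snd x =? N)%Z then 1 else 0).
Proof.
  destruct x as [a b]. unfold nbr_mean, row_correction. simpl.
  destruct (Z.eqb_spec b N); destruct (Z_lt_le_dec b N); try lia;
    repeat match goal with |- context [Z.max ?u ?v] =>
      first [rewrite (Z.max_l u v) by lia | rewrite (Z.max_r u v) by lia] end;
    try subst; rewrite ?minus_IZR, ?plus_IZR; lra.
Qed.

Lemma subsolution_sub x :
  subsolution x <= nbr_mean subsolution x + (if (snd x =? N)%Z then 1 else 0).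
Proof.
  unfold subsolution. pose proof (row_correction_eq x). pose proof (glued_barrier_sub x).
  replace (nbr_mean (fun y => row_correction y + glued_barrier y) x)
    with (nbr_mean row_correction x + nbr_mean glued_barrier x)
    by (destruct x as [a b]; unfold nbr_mean; simpl; lra).
  lra.
Qed.

Lemma subsolution_le0 x : (forall k, (k <= K)%nat -> in_cone_below k x = false) -> subsolution x <= 0.
Proof.
  intros H. unfold subsolution, row_correction.
  assert (Hg : glued_barrier x <= Rmax 0 (4 * IZR (snd x - N))).
  { apply maxR_le; [lra|]. intros r Hr. apply in_map_iff in Hr as [k [<- Hk]]. apply in_seq in Hk.
    unfold barrier_piece. rewrite H by lia. apply Rmax_l. }
  destruct (Z_lt_le_dec (snd x) N).
  - assert (IZR (snd x - N) <= 0) by (apply IZR_le; lia).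
    rewrite Z.max_l by lia. rewrite Rmax_left in Hg by lra. lra.
  - assert (0 <= IZR (snd x - N)) by (apply IZR_le; lia).
    rewrite Z.max_r by lia. rewrite Rmax_right in Hg by lra. lra.
Qed.

Lemma subsolution_outside x : in_cones p K h0 x = false -> subsolution x <= 0.
Proof. intros Hx. apply subsolution_le0. intros k _. unfold in_cone_below. now rewrite Hx. Qed.

Lemma subsolution_high x : (h0 + cone_top p K <= snd x)%Z -> subsolution x <= 0.
Proof.
  intros Hx. apply subsolution_le0. intros k Hk. unfold in_cone_below.
  pose proof (cone_top_mono p k K Hk). rewrite (proj2 (Z.ltb_ge _ _)) by lia. apply Bool.andb_false_r.
Qed.

Lemma subsolution_at_base : (h0 + base p 0 + 1 <= N)%Z -> 1 <= subsolution (0, h0 + base p 0 + 1)%Z.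
Proof.
  intros HN. set (x := (0, h0 + base p 0 + 1)%Z).
  assert (Hrow : row_correction x = 0) by (unfold row_correction, x; simpl; rewrite Z.max_l by lia; lra).
  assert (HD : in_cone_below 0 x = true).
  { unfold in_cone_below, x. replace (h0 + base p 0 + 1)%Z with (h0 + (base p 0 + 1))%Z by lia.
    rewrite in_cones_axis by (pose proof (base_ge1 p 0); lia). simpl. apply Z.ltb_lt.
    pose proof (base0_lt_cone_top0 p). lia. }
  pose proof (glued_barrier_ge_piece 0 x ltac:(lia)) as Hpiece.
  unfold barrier_piece in Hpiece. rewrite HD in Hpiece.
  unfold cone_barrier, x, barrier_slope in Hpiece. simpl in Hpiece. fold x in Hpiece.
  replace (h0 + base p 0 + 1 - h0)%Z with (base p 0 + 1)%Z in Hpiece by lia. rewrite plus_IZR in Hpiece.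
  pose proof (barrier_curv_pos p 0).
  assert (1 <= IZR (base p 0)) by (apply IZR_le, base_ge1).
  unfold subsolution. rewrite Hrow. nra.
Qed.

Lemma cones_bounded x : in_cones p K h0 x = true -> (snd x < h0 + cone_top p K)%Z ->
  (Z.abs (fst x) <= cone_top p K * slope p K)%Z.
Proof.
  intros Hx Ht. destruct (in_cones_slope p K h0 x Hx) as [m [Hm [_ Hs]]].
  pose proof (in_cones_above p K h0 x Hx). nia.
Qed.

End Subsolution.

Section GreenLowerBound.
Variables (p K : nat) (h0 N : Z) (V : pt -> R).
Hypothesis top_high : (4 * (N - h0) <= cone_top p K)%Z.
Hypothesis N_high : (h0 + base p 0 + 1 <= N)%Z.
Hypothesis V_lim : forall x, Un_cv (fun j => row_visits (in_cones p K h0) N j x) (V x).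

Lemma green_at_base : 1 <= V (0, h0 + base p 0 + 1)%Z.
Proof.
  eapply Rle_trans; [apply (subsolution_at_base p K h0 N N_high)|].
  apply (subsolution_le_supersolution (in_cones p K h0) (fun x => if (snd x =? N)%Z then 1 else 0)
           _ _ h0 (h0 + cone_top p K) (cone_top p K * slope p K)).
  - apply in_cones_above.
  - apply cones_bounded.
  - intros x _. now apply subsolution_sub.
  - intros x Hx. rewrite (green_eq _ _ _ V_lim x Hx). lra.
  - apply (green_ge0 _ _ _ V_lim).
  - apply subsolution_outside.
  - apply subsolution_high.
Qed.

Lemma green_axis_step t : (1 <= t)%Z -> V (0, h0 + t + 1)%Z <= 4 * V (0, h0 + t)%Z.
Proof.
  intros Ht. set (x := (0, h0 + t)%Z).
  assert (Hx : in_cones p K h0 x = true) by (apply in_cones_axis; lia).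
  pose proof (green_eq _ _ _ V_lim x Hx) as HV.
  pose proof (nbr_mean_up V x (green_ge0 _ _ _ V_lim)).
  assert (0 <= (if (snd x =? N)%Z then 1 else 0)) by (destruct (_ =? _)%Z; lra).
  unfold x in *; simpl in *. lra.
Qed.

Lemma green_lower_bound : (/ 4) ^ Z.to_nat (base p 0) <= V (0, h0 + 1)%Z.
Proof.
  assert (Hchain : forall j : nat, (/ 4) ^ j * V (0, h0 + 1 + Z.of_nat j)%Z <= V (0, h0 + 1)%Z).
  { induction j as [|j IH].
    - simpl. rewrite Z.add_0_r. lra.
    - eapply Rle_trans; [|apply IH].
      replace (h0 + 1 + Z.of_nat (S j))%Z with (h0 + (1 + Z.of_nat j) + 1)%Z by lia.
      pose proof (green_axis_step (1 + Z.of_nat j) ltac:(lia)).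
      replace (h0 + (1 + Z.of_nat j))%Z with (h0 + 1 + Z.of_nat j)%Z in * by lia.
      pose proof (pow_lt (/ 4) j ltac:(lra)). simpl pow. nra. }
  pose proof (Hchain (Z.to_nat (base p 0))). pose proof (base_ge1 p 0).
  replace (h0 + 1 + Z.of_nat (Z.to_nat (base p 0)))%Z with (h0 + base p 0 + 1)%Z in * by lia.
  pose proof green_at_base. pose proof (pow_lt (/ 4) (Z.to_nat (base p 0)) ltac:(lra)). nra.
Qed.

End GreenLowerBound.

(** * The cones avoid [B], [l_h0] and [L_0] *)

Lemma ln_le x y : 0 < x -> x <= y -> ln x <= ln y.
Proof. intros Hx Hxy. destruct (Rle_lt_or_eq_dec x y Hxy); [apply Rlt_le, ln_increasing | subst]; lra. Qed.

(* [s < t m <= t^(1 + 1/p) <= x^alpha] when [m^p <= t <= x]. *)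
Lemma rpow_lt_of_cone (alpha s t m x : R) (p : nat) :
  (1 <= p)%nat -> 1 + / INR p <= alpha -> 0 <= s -> 1 <= m -> m ^ p <= t -> s < t * m -> t <= x ->
  rpow s (1 / alpha) < x.
Proof.
  intros Hp Ha Hs Hm Hmp Hst Hx.
  assert (HpR : 1 <= INR p) by (apply (le_INR 1); auto).
  assert (Halpha : 1 < alpha) by (pose proof (Rinv_0_lt_compat (INR p) ltac:(lra)); lra).
  assert (Ht : 1 <= t) by (pose proof (pow_R1_Rle m p Hm); lra).
  unfold rpow. destruct (Req_EM_T s 0) as [->|Hs0]; [lra|]. unfold Rpower.
  rewrite <- (exp_ln x) by lra. apply exp_increasing.
  assert (H1 : ln s < ln t + ln m) by (rewrite <- ln_mult by lra; apply ln_increasing; lra).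
  assert (H2 : INR p * ln m <= ln t) by (rewrite <- ln_pow by lra; apply ln_le; [apply pow_lt; lra | auto]).
  assert (H3 : 0 <= ln t) by (rewrite <- ln_1; apply ln_le; lra).
  assert (H4 : ln t <= ln x) by (apply ln_le; lra).
  assert (H5 : ln m <= ln t * / INR p).
  { apply (Rmult_le_reg_l (INR p)); [lra|].
    replace (INR p * (ln t * / INR p)) with (ln t) by (field; lra). lra. }
  assert (H6 : ln t * (1 + / INR p) <= alpha * ln t) by nra.
  apply (Rmult_lt_reg_l alpha); [lra|].
  replace (alpha * (1 / alpha * ln s)) with (ln s) by (field; lra). nra.
Qed.

Lemma in_cones_not_below_curve alpha p K h0 x : (1 <= p)%nat -> 1 + / INR p <= alpha -> (0 <= h0)%Z ->
  in_cones p K h0 x = true -> ~ below_curve alpha x.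
Proof.
  intros Hp Ha Hh0 Hx [_ Hb].
  destruct (in_cones_slope p K h0 x Hx) as [m [Hm [Hmp Hs]]].
  pose proof (in_cones_above p K h0 x Hx).
  enough (rpow (Rabs (IZR (fst x))) (1 / alpha) < IZR (snd x)) by lra.
  apply (rpow_lt_of_cone alpha _ (IZR (snd x - h0)) (IZR m) _ p); auto.
  - apply Rabs_pos.
  - apply IZR_le; lia.
  - rewrite pow_IZR. apply IZR_le. lia.
  - rewrite <- abs_IZR, <- mult_IZR. apply IZR_lt. lia.
  - apply IZR_le. lia.
Qed.

Lemma is_h0_nonneg alpha B h0 : (forall x, B x = true -> (0 <= snd x)%Z) -> is_h0 alpha B h0 -> (0 <= h0)%Z.
Proof. intros HBH [[_ [[x [[Hx _] <-]] _]] | [_ [H _]]]; auto. Qed.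

Lemma cones_avoid alpha B h0 p K x : (1 <= p)%nat -> 1 + / INR p <= alpha ->
  (forall y, B y = true -> (0 <= snd y)%Z) -> is_h0 alpha B h0 ->
  in_cones p K h0 x = true -> (setU B (in_lh alpha h0) x || (snd x =? 0)%Z)%bool = false.
Proof.
  intros Hp Ha HBH Hh0 Hx. pose proof (is_h0_nonneg alpha B h0 HBH Hh0).
  pose proof (in_cones_above p K h0 x Hx).
  pose proof (in_cones_not_below_curve alpha p K h0 x Hp Ha ltac:(lia) Hx).
  unfold setU, in_lh. rewrite (proj2 (Z.eqb_neq (snd x) h0)), (proj2 (Z.eqb_neq (snd x) 0)) by lia.
  destruct (B x) eqn:HB; [exfalso | reflexivity].
  assert (Hin : in_Bhat alpha B x) by (split; auto).
  destruct Hh0 as [[_ [_ Hmax]] | [Hnone _]]; [specialize (Hmax x Hin); lia | exact (Hnone x Hin)].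
Qed.

Lemma exists_cone_exponent alpha : 1 < alpha -> exists p : nat, (1 <= p)%nat /\ 1 + / INR p <= alpha.
Proof.
  intros Ha. destruct (archimed (/ (alpha - 1))) as [Hup _].
  assert (Hinv : 0 < / (alpha - 1)) by (apply Rinv_0_lt_compat; lra).
  assert (Hup1 : (0 < up (/ (alpha - 1)))%Z) by (apply lt_IZR; lra).
  exists (Z.to_nat (up (/ (alpha - 1)))). split; [lia|].
  rewrite INR_IZR_INZ, Z2Nat.id by lia.
  assert (/ IZR (up (/ (alpha - 1))) < / / (alpha - 1)) by (apply Rinv_lt_contravar; nra).
  rewrite Rinv_inv in *. lra.
Qed.

Lemma Hbar_le_total_partial alpha B h0 N K : (0 <= h0)%Z ->
  Hbar_partial (setU B (in_lh alpha h0)) N (0, h0)%Z K <= total_partial alpha B h0 N K.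
Proof.
  intros Hh0. unfold total_partial.
  apply (sumR_ge_term (fun i => Hbar_partial (setU B (in_lh alpha h0)) N (i, h0) K)).
  - apply In_zrange. unfold lh_bound, Defs.Zfloor.
    assert (0 <= rpow (IZR h0) alpha).
    { unfold rpow. destruct (Req_EM_T (IZR h0) 0); [lra|]. apply Rlt_le, exp_pos. }
    destruct (archimed (rpow (IZR h0) alpha)) as [Hup _].
    assert (0 < up (rpow (IZR h0) alpha))%Z by (apply lt_IZR; lra). lia.
  - intros i _. apply sumR_ge0. intros z _. destruct (setU B (in_lh alpha h0) (z, N)); [lra|].
    apply sumR_ge0. intros m _.
    apply Rmult_le_pos; [apply pos_INR | apply Rlt_le, Rinv_0_lt_compat, pow_lt; lra].
Qed.

Theorem lemma1 (alpha : R) (B : zset) (h0 : Z)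
  (Halpha : 1 < alpha)
  (HBH : forall x : pt, B x = true -> (0 <= snd x)%Z)
  (HBne : exists x : pt, B x = true)
  (HBhat_fin : exists l : list pt, forall x, in_Bhat alpha B x -> In x l)
  (Hh0 : is_h0 alpha B h0) :
  exists c : R, 0 < c /\
    exists N0 : Z, forall N : Z, (N0 <= N)%Z ->
      forall eps : R, 0 < eps ->
        exists K : nat, c - eps <= total_partial alpha B h0 N K.
Proof.
  (* [HBne] and [HBhat_fin] only make [h0] well defined, which [Hh0] already grants. *)
  pose proof (is_h0_nonneg alpha B h0 HBH Hh0) as Hh0pos.
  destruct (exists_cone_exponent alpha Halpha) as [p [Hp Hpa]].
  pose proof (base_ge1 p 0).
  exists (/ 4 * (/ 4) ^ Z.to_nat (base p 0)).
  split; [apply Rmult_lt_0_compat; [lra | apply pow_lt; lra]|].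
  exists (h0 + base p 0 + 1)%Z. intros N HN eps Heps.
  set (K := Z.to_nat (4 * (N - h0))).
  assert (Htop : (4 * (N - h0) <= cone_top p K)%Z) by (pose proof (cone_top_ge p K); unfold K in *; lia).
  destruct (row_visits_cv (in_cones p K h0) N h0 (in_cones_above p K h0) ltac:(lia)) as [V HV].
  pose proof (green_lower_bound p K h0 N V Htop HN HV).
  destruct (HV (0, h0 + 1)%Z (4 * eps) ltac:(lra)) as [K1 HK1].
  specialize (HK1 K1 (le_n _)). apply Rabs_def2 in HK1 as [_ HK1].
  exists (S K1).
  pose proof (row_visits_le_Hbar (in_cones p K h0) N (setU B (in_lh alpha h0))
                (fun x => cones_avoid alpha B h0 p K x Hp Hpa HBH Hh0) h0 K1).
  pose proof (Hbar_le_total_partial alpha B h0 N (S K1) Hh0pos).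
  lra.
Qed.
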